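(* Let $p$ be a prime and $P=C_p\wr C_p$ (the regular wreath product of two cyclic groups of order $p$). Then $\eta_i(P)=Z_i(P)$ for all $i\ge 0$, where $Z_i(P)$ is the $i$-th term of the upper central series.
   Context: For a finite $p$-group $P$, a normal subgroup $N$ of $P$ is powerfully embedded in $P$ if $[N,P]\le N^p$ when $p$ is odd, and $[N,P]\le N^4$ when $p=2$ (here $N^{k}$ denotes the subgroup generated by all $k$-th powers of elements of $N$). $\eta(P)$ denotes the largest powerfully embedded subgroup of $P$ (the product of all powerfully embedded subgroups of $P$). The upper $\eta$-series of $P$ is defined by $\eta_0(P)=1$ and $\eta_{i+1}(P)/\eta_i(P)=\eta(P/\eta_i(P))$ for $i\ge 0$. *)

From mathcomp Require Import all_boot all_fingroup all_solvable.
Set Implicit Arguments. Unset Strict Implicit. Unset Printing Implicit Defensive.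
Local Open Scope group_scope.

Section EtaDefs.
Variables (p : nat) (gT : finGroupType).

Definition pow_subgroup (N : {set gT}) (k : nat) : {set gT} :=
  <<[set x ^+ k | x in N]>>.

Definition powerfully_embedded (N P : {set gT}) : bool :=
  (N <| P) && ([~: N, P] \subset pow_subgroup N (if p == 2 then 4 else p)).

Definition eta_sub (P : {set gT}) : {set gT} :=
  <<\bigcup_(N : {group gT} | powerfully_embedded N P) N>>.

End EtaDefs.

Definition upper_eta (p n : nat) (gT : finGroupType) (A : {set gT}) : {set gT} :=
  iter n (fun B => coset B @*^-1 eta_sub p (A / B)) 1.

(* P is (internally) the regular wreath product C_p wr C_p:
   P = A ><| <[x]> with A = a_0 x ... x a_{p-1} a direct product of cyclic
   groups of order p, a_i = a^(x^i), and #[x] = p (x permutes the factors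
   cyclically since x^p = 1). *)
Definition is_wreath_CpCp (p : nat) (gT : finGroupType) (P : {set gT}) : Prop :=
  exists a x : gT,
    [/\ #[a] = p, #[x] = p &
        (\big[dprod/1]_(i < p) <[a ^ (x ^+ i)]>) ><| <[x]> = P].

From mathcomp Require Import all_boot all_fingroup all_solvable.
Set Implicit Arguments. Unset Strict Implicit. Unset Printing Implicit Defensive.
Local Open Scope group_scope.

(* Let A be the base group, elementary abelian of index p in P. It suffices that every N
   powerfully embedded in Q = P/Z_i(P) satisfies N^k = 1 (k = 4 if p = 2, k = p otherwise):
   then [N,Q] = 1, so eta(Q) = Z(Q) and eta_i = Z_i follows by induction. For p = 2 the
   group P has exponent 4. For odd p, p-th powers in P are central (A is abelian of prime
   index), so [N,Q] <= N^p <= Z(Q) puts N in Z_2(Q) = Z_(i+2)(P)/Z_i(P); this has exponent p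
   because p-th powers lie in Z(P) <= Z_i(P) when i > 0, and because Z_2(P) <= A when i = 0,
   the latter since the top generator x cannot act on the regular F_p[C_p]-module A
   with (x - 1)^2 = 0 when p > 2. *)

Section PowerfulEmbedding.

Variable gT : finGroupType.
Implicit Types (N Q : {group gT}) (k : nat).

Lemma pow_subgroup_sub k N (H : {group gT}) :
  {in N, forall y, y ^+ k \in H} -> pow_subgroup N k \subset H.
Proof.
by move=> NkH; rewrite gen_subG; apply/subsetP => _ /imsetP[y Ny ->]; apply: NkH.
Qed.

Lemma pow_embedded_sub_center k N Q :
    {in Q, forall y, y ^+ k \in 'Z(Q)} -> {in 'Z_2(Q), forall y, y ^+ k = 1} ->
  N <| Q -> [~: N, Q] \subset pow_subgroup N k -> N \subset 'Z(Q).
Proof.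
move=> expQ expZ2 /andP[sNQ _] sNQNk.
have sNZ2 : N \subset 'Z_2(Q).
  have sNQZ : [~: N, Q] \subset 'Z(Q).
    by apply: subset_trans sNQNk (pow_subgroup_sub _) => y /(subsetP sNQ)/expQ.
  apply/subsetP => y Ny; rewrite ucnSnR inE (subsetP sNQ) //= ucn1.
  by apply: subset_trans sNQZ; rewrite commSg ?sub1set.
have: [~: N, Q] \subset [1 gT].
  by apply: subset_trans sNQNk (pow_subgroup_sub _) => y /(subsetP sNZ2)/expZ2 ->.
by move/trivgP/commG1P => cNQ; rewrite subsetI sNQ.
Qed.

Lemma eta_sub_center p Q :
    (forall N, powerfully_embedded p N Q -> N \subset 'Z(Q)) ->
  eta_sub p Q = 'Z(Q).
Proof.
move=> peZ; apply/eqP; rewrite eqEsubset gen_subG.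
apply/andP; split; first by apply/bigcupsP.
have peZQ : powerfully_embedded p 'Z(Q) Q.
  by rewrite /powerfully_embedded center_normal (commG1P _) ?sub1G ?subsetIr.
by apply: sub_gen; apply: (bigcup_max 'Z(Q)%G).
Qed.

End PowerfulEmbedding.

Lemma upper_eta_ucn (gT : finGroupType) p (P : {group gT}) :
    (forall i (N : {group coset_of 'Z_i(P)}),
       powerfully_embedded p N (P / 'Z_i(P)) -> N \subset 'Z(P / 'Z_i(P))) ->
  forall i, upper_eta p i P = 'Z_i(P).
Proof.
move=> peZ; elim=> [|i IHi] //.
rewrite /upper_eta iterS -/(upper_eta p i P) IHi ucnSn.
by rewrite (eta_sub_center (Q := (P / 'Z_i(P))%G)) => // N /peZ.
Qed.

Section QuotientUpperCentral.

Variables (gT : finGroupType) (k : nat) (P : {group gT}).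
Hypotheses (expP : {in P, forall g, g ^+ k \in 'Z(P)})
           (expZ2 : {in 'Z_2(P), forall g, g ^+ k = 1}).

Lemma expg_center_ucn i g : g \in P -> g ^+ k \in 'Z_i.+1(P).
Proof. by move/expP; apply: subsetP; rewrite -ucn1 ucn_sub_geq. Qed.

Lemma expg_ucn_add2 i g : g \in 'Z_(2 + i)(P) -> g ^+ k \in 'Z_i(P).
Proof.
case: i => [|i] Zg; first by rewrite expZ2 ?group1.
by apply: expg_center_ucn; apply: subsetP Zg; apply: ucn_sub.
Qed.

Lemma quotient_ucn_expg_center i :
  {in P / 'Z_i(P), forall y, y ^+ k \in 'Z(P / 'Z_i(P))}.
Proof.
move=> _ /morphimP[g Ng Pg ->]; rewrite -morphX // -ucn_central.
by apply: mem_quotient; apply: expg_center_ucn.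
Qed.

Lemma quotient_ucn2_expg i : {in 'Z_2(P / 'Z_i(P)), forall y, y ^+ k = 1}.
Proof.
move=> y; rewrite -quotient_ucn_add => /morphimP[g Ng Zg ->].
by rewrite -morphX //; apply: coset_id; apply: expg_ucn_add2.
Qed.

End QuotientUpperCentral.

Lemma upper_eta_ucn_exponent (gT : finGroupType) p (P : {group gT}) :
    {in P, forall g, g ^+ (if p == 2 then 4 else p) \in 'Z(P)} ->
    {in 'Z_2(P), forall g, g ^+ (if p == 2 then 4 else p) = 1} ->
  forall i, upper_eta p i P = 'Z_i(P).
Proof.
move=> expP expZ2; apply: upper_eta_ucn => i N /andP[nsNQ sNQNk].
apply: pow_embedded_sub_center nsNQ sNQNk.
  exact: quotient_ucn_expg_center.
exact: quotient_ucn2_expg.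
Qed.

Section PrimeIndexAbelem.

Variables (gT : finGroupType) (p : nat) (A P : {group gT}).
Hypotheses (p_pr : prime p) (nsAP : A <| P) (iPA : #|P : A| = p).

Lemma expg_index_mem g : g \in P -> g ^+ #|P : A| \in A.
Proof.
move=> Pg; have Ng := subsetP (normal_norm nsAP) g Pg.
apply: coset_idr; first by rewrite groupX.
by rewrite morphX // -card_quotient ?normal_norm // expg_cardG ?mem_quotient.
Qed.

Hypothesis abelA : p.-abelem A.

(* Outside A, g and A generate P (A is maximal) and both centralize g^p, which lies in A. *)
Lemma expg_prime_index_center g : g \in P -> g ^+ p \in 'Z(P).
Proof.
move=> Pg; have /(abelemP p_pr)[cAA expA] := abelA.
have Ag := expg_index_mem Pg; rewrite iPA in Ag.
have [gA | A'g] := boolP (g \in A); first by rewrite expA ?group1.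
have maxA : maximal A P by rewrite p_index_maximal ?normal_sub ?iPA.
have defP : A * <[g]> = P.
  by apply: mulg_normal_maximal; rewrite ?cycle_subG.
rewrite inE groupX // -defP centM inE cent_cycle (subsetP cAA) //.
by apply/cent1P/commute_sym/commuteX.
Qed.

End PrimeIndexAbelem.

Lemma conjg_expg_shift (gT : finGroupType) (a g w : gT) m :
  commute w g -> a ^ g = a * w -> a ^ (g ^+ m) = a * w ^+ m.
Proof.
move=> cwg ag; elim: m => [|m IHm]; first by rewrite conjg1 mulg1.
by rewrite expgSr conjgM IHm conjMg ag conjXg conjgE cwg mulKg -mulgA -expgS.
Qed.

Lemma bigdprod_abelem (gT : finGroupType) p I (r : seq I) (Pr : pred I)
    (F : I -> {set gT}) (G : {group gT}) :
    (forall i, Pr i -> p.-abelem (F i)) ->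
  \big[dprod/1]_(i <- r | Pr i) F i = G -> p.-abelem G.
Proof.
move=> abelF; elim/big_rec: _ G => [G <- | i B Pi IHB G defG].
  exact: abelem1.
have [[K H defK defB] _ _ _] := dprodP defG.
by rewrite (dprod_abelem _ defG) abelF //= defB IHB.
Qed.

Section WreathCpCp.

Variables (gT : finGroupType) (p : nat) (a x : gT) (A P : {group gT}).
Hypotheses (p_pr : prime p) (oa : #[a] = p) (ox : #[x] = p).
Hypotheses (defA : \big[dprod/1]_(i < p) <[a ^ (x ^+ i)]> = A)
           (defP : A ><| <[x]> = P).

Lemma wreath_base_abelem : p.-abelem A.
Proof.
apply: bigdprod_abelem defA => i _.
by rewrite cycle_abelem ?p_pr ?orbT // orderJ oa.
Qed.

Lemma wreath_base_normal : A <| P.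
Proof. by case/sdprod_context: defP. Qed.

Lemma wreath_base_index : #|P : A| = p.
Proof. by rewrite -(index_sdprod defP). Qed.

Lemma wreath_base_not_gen2 : 2 < p -> a \notin <<[set a ^ x; a ^ (x ^+ 2)]>>.
Proof.
move=> p_gt2; have p_gt1 := ltnW p_gt2; have p_gt0 := ltnW p_gt1.
pose i0 : 'I_p := Ordinal p_gt0.
have [[K H defK defH] _ _ tiKH] := dprodP (etrans (esym (bigD1 i0 isT)) defA).
have sXH : <<[set a ^ x; a ^ (x ^+ 2)]>> \subset H.
  rewrite -(bigdprodWY defH) genS //; apply/subsetP => y /set2P[]->.
    by apply/bigcupP; exists (Ordinal p_gt1); rewrite ?expg1 ?cycle_id.
  by apply/bigcupP; exists (Ordinal p_gt2); rewrite ?cycle_id.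
apply/negP => /(subsetP sXH) Ha.
have Ka : a \in K by rewrite -defK conjg1 cycle_id.
have: a \in K :&: H by rewrite inE Ka.
by rewrite -defK -defH tiKH => /set1P a1; move: p_gt1; rewrite -oa a1 order1.
Qed.

(* An element of Z_2(P) outside A would make x act on a as translation by a central w,
   whence a = (a^x)^2 (a^(x^2))^-1 would lie in the product of the other factors. *)
Lemma wreath_ucn2_sub : odd p -> 'Z_2(P) \subset A.
Proof.
move=> p_odd; apply: contraR (wreath_base_not_gen2 (odd_prime_gt2 p_odd p_pr)).
move=> not_sZA; have nsAP := wreath_base_normal.
have maxA : maximal A P.
  by rewrite p_index_maximal ?normal_sub ?wreath_base_index.
have Px : x \in P by case/sdprod_context: defP => _ /subsetP-> //; rewrite cycle_id.
have Aa : a \in A.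
  rewrite -(bigdprodWY defA) mem_gen //; apply/bigcupP.
  by exists (Ordinal (prime_gt0 p_pr)); rewrite ?conjg1 ?cycle_id.
have Pa := subsetP (normal_sub nsAP) a Aa.
have /mulsgP[c h Ac Zh def_x] : x \in A * 'Z_2(P).
  by rewrite (mulg_normal_maximal nsAP maxA) ?ucn_sub.
set w := [~ a, h].
have /setIP[_ /centP cwP] : w \in 'Z(P).
  by rewrite /w -ucn1 -invg_comm groupV (subsetP (ucn_comm 1 P)) ?mem_commg.
have ax : a ^ x = a * w.
  have /abelem_abelian/centsP cAA := wreath_base_abelem.
  by rewrite def_x conjgM (conjg_fixP (introT commgP (cAA a Aa c Ac))) conjg_mulR.
have ax2 : a ^ (x ^+ 2) = a * w ^+ 2 by apply: conjg_expg_shift => //; apply: cwP.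
have cwa : commute w a by apply: cwP.
have def_a : a = (a ^ x) ^+ 2 * (a ^ (x ^+ 2))^-1.
  rewrite ax ax2 expgMn; last exact: commute_sym.
  by rewrite invMg mulgA mulgK expgS expg1 mulgK.
by rewrite {1}def_a groupM ?groupV ?groupX ?mem_gen ?set21 ?set22.
Qed.

End WreathCpCp.

Theorem lemma3p1 (p : nat) (gT : finGroupType) (P : {group gT}) :
  prime p -> is_wreath_CpCp p P ->
  forall i : nat, upper_eta p i P = 'Z_i(P).
Proof.
move=> p_pr [a [x [oa ox defP]]].
have [[A _ defA _] _ _ _] := sdprodP defP; rewrite defA in defP.
have abelA := wreath_base_abelem p_pr oa defA.
have /(abelemP p_pr)[_ expA] := abelA.
have nsAP := wreath_base_normal defP; have iPA := wreath_base_index ox defP.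
have [p2 | p_odd] := even_prime p_pr.
  have expP4 g : g \in P -> g ^+ 4 = 1.
    move=> Pg; have := expg_index_mem nsAP Pg; rewrite iPA => A_g2.
    by rewrite (expgM g 2 2) -{2}p2 expA // -p2.
  apply: upper_eta_ucn_exponent; rewrite p2 => g Gg; rewrite expP4 ?group1 //.
  exact: subsetP (ucn_sub 2 P) g Gg.
have p_neq2 : (p == 2) = false by apply/eqP => p2; rewrite p2 in p_odd.
apply: upper_eta_ucn_exponent; rewrite p_neq2 => g Gg.
  exact: expg_prime_index_center p_pr nsAP iPA abelA g Gg.
by rewrite expA // (subsetP (wreath_ucn2_sub p_pr oa ox defA defP p_odd)).
Qed.
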